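(* Let $U\subset\mathbb{R}^2$ be open, let $x:U\to\mathbb{R}^3$ be smooth, let $\xi:U\to S^2$ be a proper frontal such that the line congruence $\{x,\xi\}$ is normal, and let $\Omega$ be a tangent moving basis of $\xi$ with $D\xi=\Omega\Delta_\Omega^T$ and $\delta_\Omega=\det\Delta_\Omega$. Then the equation of principal surfaces is a multiple by $\delta_\Omega$ of the equation of developable surfaces; more precisely, $$\Delta_\Omega\,\mathbf{P}\,\mathrm{adj}(\boldsymbol{\mathcal{II}}_\Omega)^T\Delta_\Omega\,\boldsymbol{\mathcal{I}}_\Omega\,\Delta_\Omega^T=\delta_\Omega\,\mathbf{P}\,\mathrm{adj}(\boldsymbol{\mathcal{II}}_\Omega)\,\boldsymbol{\mathcal{I}}_\Omega\,\Delta_\Omega^T\quad\text{on }U,$$ where $\mathbf{P}=\begin{pmatrix}0&1\\-1&0\end{pmatrix}$.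
   Context: A frontal is a smooth map $f:U\to\mathbb{R}^3$ admitting locally a smooth unit vector field orthogonal to $f_{u_1},f_{u_2}$; proper means its singular set $\Sigma(f)$ (points where $f$ is not immersive) has empty interior. A tangent moving basis of $\xi$ is a smooth $\Omega=(w_1\ w_2):U\to M_{3\times2}(\mathbb{R})$ with linearly independent columns whose span contains $\xi_{u_1},\xi_{u_2}$; then $D\xi=\Omega\Delta_\Omega^T$ for a unique smooth $\Delta_\Omega$ and $\Sigma(\xi)=\delta_\Omega^{-1}(0)$. $\boldsymbol{\mathcal{I}}_\Omega=\Omega^T\Omega$, $\boldsymbol{\mathcal{II}}_\Omega=-\Omega^TDx$, $\mathrm{adj}$ is the adjugate. The congruence $\{x,\xi\}$ (lines through $x(u)$ in direction $\xi(u)$) is normal if there is a surface $S'$ whose normal lines are parallel to the lines of the congruence. For a curve $(u_1(t),u_2(t))$ in $U$, the equation of principal surfaces of a normal congruence is $(u_1',u_2')\,\Delta_\Omega\mathbf{P}\,\mathrm{adj}(\boldsymbol{\mathcal{II}}_\Omega)^T\Delta_\Omega\boldsymbol{\mathcal{I}}_\Omega\Delta_\Omega^T(u_1',u_2')^T=0$ (its solutions are the curves whose congruence surfaces $x+v\xi$ have, wherever $\Delta_\Omega^T(u_1',u_2')^T\neq0$, velocity direction extremizing $b\mapsto \frac{b^T\boldsymbol{\mathcal{II}}_\Omega\mathrm{adj}(\Delta_\Omega^T)b}{b^T\boldsymbol{\mathcal{I}}_\Omega b}$), and the equation of developable surfaces is $(u_1',u_2')\,\mathbf{P}\,\mathrm{adj}(\boldsymbol{\mathcal{II}}_\Omega)\boldsymbol{\mathcal{I}}_\Omega\Delta_\Omega^T(u_1',u_2')^T=0$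 (its solutions are the curves whose congruence surfaces are developable). *)

From HB Require Import structures.
From mathcomp Require Import all_boot all_order all_algebra.
From mathcomp Require Import all_classical all_reals all_analysis.
Set Implicit Arguments. Unset Strict Implicit. Unset Printing Implicit Defensive.
Import Order.TTheory GRing.Theory Num.Theory.
Import numFieldNormedType.Exports.
Local Open Scope classical_set_scope.
Local Open Scope ring_scope.

Section Defs.
Variable R : realType.

Definition pt := 'rV[R]_2.

Definition ebasis (j : 'I_2) : pt := delta_mx 0 j.

Fixpoint iterD (W : normedModType R) (vs : seq pt) (f : pt -> W) : pt -> W :=
  match vs with
  | [::] => f
  | v :: vs' => fun p => derive (iterD vs' f) p v
  end.

Definition smooth_on (W : normedModType R) (U : set pt) (f : pt -> W) :=
  forall (vs : seq pt) (p : pt), U p -> differentiable (iterD vs f) p.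

Definition partial (W : normedModType R) (j : 'I_2) (f : pt -> W) (p : pt) : W :=
  derive f p (ebasis j).

Definition dot (a b : 'rV[R]_3) : R := (a *m b^T) 0 0.

Definition jac (f : pt -> 'rV[R]_3) (p : pt) : 'M[R]_(3, 2) :=
  \matrix_(i < 3, j < 2) partial j f p 0 i.

Definition frontal (U : set pt) (f : pt -> 'rV[R]_3) :=
  smooth_on U f /\
  forall p, U p -> exists V : set pt, [/\ open V, V p, V `<=` U &
    exists nu : pt -> 'rV[R]_3, smooth_on V nu /\
      forall u, V u -> dot (nu u) (nu u) = 1 /\
        forall j : 'I_2, dot (nu u) (partial j f u) = 0].

Definition singular_set (U : set pt) (f : pt -> 'rV[R]_3) : set pt :=
  [set u | U u /\ \rank (jac f u) != 2%N].

Definition proper_frontal (U : set pt) (f : pt -> 'rV[R]_3) :=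
  frontal U f /\ interior (singular_set U f) = set0.

Definition tangent_moving_basis (U : set pt) (xi : pt -> 'rV[R]_3)
    (Om : pt -> 'M[R]_(3, 2)) :=
  smooth_on U Om /\
  forall u, U u -> \rank (Om u) = 2%N /\ ((jac xi u)^T <= (Om u)^T)%MS.

(* The line congruence {x, xi} is normal: there is a surface
   S' = x + t xi (t smooth) to which xi is normal. *)
Definition normal_congruence (U : set pt) (x xi : pt -> 'rV[R]_3) :=
  exists t : pt -> R, smooth_on U t /\
    forall u, U u -> forall j : 'I_2,
      dot (xi u) (partial j (fun v => x v + t v *: xi v) u) = 0.

Definition Iform (Om : pt -> 'M[R]_(3, 2)) (u : pt) : 'M[R]_2 :=
  (Om u)^T *m Om u.

Definition IIform (Om : pt -> 'M[R]_(3, 2)) (x : pt -> 'rV[R]_3) (u : pt)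
  : 'M[R]_2 := - ((Om u)^T *m jac x u).

Definition Pmx : 'M[R]_2 :=
  \matrix_(i < 2, j < 2)
    (if (i == 0 :> nat) && (j == 1 :> nat) then 1
     else if (i == 1 :> nat) && (j == 0 :> nat) then -1 else 0).

End Defs.

(* Since D xi = Om Delta^T, the matrix Delta II = -(D xi)^T Dx has entries
   -xi_{u_i}.x_{u_j}.  If x + t xi is a surface orthogonal to the unit field xi,
   then xi.x_{u_j} = -t_{u_j}; differentiating in u_i and using the symmetry of
   second derivatives of x and t shows that xi_{u_i}.x_{u_j} is symmetric in
   i, j, i.e. Delta II is symmetric.  For 2 x 2 matrices P adj(C)^T = C P,
   P adj(C) = C^T P and D^T P D = det D P, so for symmetric D C
   D P adj(C)^T D = (D C)^T P D = C^T (D^T P D) = det D P adj(C). *)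

From Pilot Require Import Defs.
From HB Require Import structures.
From mathcomp Require Import all_boot all_order all_algebra.
From mathcomp Require Import all_classical all_reals all_analysis.
From mathcomp Require Import ring lra.
Set Implicit Arguments.
Unset Strict Implicit.
Unset Printing Implicit Defensive.

Import Order.TTheory GRing.Theory Num.Theory.
Import numFieldNormedType.Exports.
Local Open Scope classical_set_scope.
Local Open Scope ring_scope.

Lemma ord2P (i : 'I_2) : i = 0 \/ i = 1.
Proof. by case: i => [[|[|i]] Hi] //; [left|right]; apply/val_inj. Qed.

Lemma lift_ord2 (i : 'I_2) (j : 'I_1) : lift i j = if i == 0 then 1 else 0.
Proof. by apply/val_inj; case: (ord2P i) => ->; rewrite (ord1 j). Qed.

Lemma big_ord2 (M : nmodType) (F : 'I_2 -> M) : \sum_(k < 2) F k = F 0 + F 1.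
Proof. by rewrite !big_ord_recl big_ord0 addr0; congr (_ + F _); apply/val_inj. Qed.

Section Mx2.
Variable R : realType.
Local Notation P := (Pmx R).
Implicit Types A C D : 'M[R]_2.

Lemma det_mx2 A : \det A = A 0 0 * A 1 1 - A 0 1 * A 1 0.
Proof.
rewrite (expand_det_row _ 0) big_ord2 /cofactor !det_mx11 !mxE /=.
by rewrite !lift_ord2 /= expr0 expr1 !mul1r mulN1r mulrN.
Qed.

Lemma trmx_Pmx_mulmx D : D^T *m P *m D = \det D *: P.
Proof.
apply/matrixP => i j; rewrite det_mx2 !mxE !big_ord2 !mxE !big_ord2 !mxE.
by case: (ord2P i) => ->; case: (ord2P j) => ->; rewrite /=; ring.
Qed.

Lemma Pmx_mulmx_adj C : P *m \adj C = C^T *m P.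
Proof.
apply/matrixP => i j; rewrite !mxE !big_ord2 !mxE /cofactor !det_mx11 !mxE.
by case: (ord2P i) => ->; case: (ord2P j) => ->; rewrite !lift_ord2 /=; ring.
Qed.

Lemma Pmx_mulmx_trmx_adj C : P *m (\adj C)^T = C *m P.
Proof.
apply/matrixP => i j; rewrite !mxE !big_ord2 !mxE /cofactor !det_mx11 !mxE.
by case: (ord2P i) => ->; case: (ord2P j) => ->; rewrite !lift_ord2 /=; ring.
Qed.

Lemma mulmx_Pmx_adj_sym C D : (D *m C)^T = D *m C ->
  D *m P *m (\adj C)^T *m D = \det D *: (P *m \adj C).
Proof.
move=> DC_sym.
rewrite -(mulmxA D) Pmx_mulmx_trmx_adj mulmxA -DC_sym trmx_mul.
by rewrite -!mulmxA (mulmxA D^T) trmx_Pmx_mulmx -scalemxAr Pmx_mulmx_adj.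
Qed.
End Mx2.

Section Schwarz.
Variables (R : realType) (V : normedModType R).

Lemma is_derive_line (W : normedModType R) (g : V -> W) (p v : V) (s : R) (d : W) :
  is_derive (p + s *: v) v g d -> is_derive s 1 (fun r => g (p + r *: v)) d.
Proof.
have quotE : (fun h : R => h^-1 *:
      (((fun r => g (p + r *: v)) \o shift s) (h *: 1) - g (p + s *: v))) =
    (fun h : R => h^-1 *: ((g \o shift (p + s *: v)) (h *: v) - g (p + s *: v))).
  by apply: funext => h /=; rewrite [h *: 1]mulr1 scalerDl addrCA addrC.
by case=> gd gdE; apply: DeriveDef; rewrite /derivable /derive quotE.
Qed.

Lemma is_derive_translate (W : normedModType R) (g : V -> W) (p a v : V) (d : W) :
  is_derive (p + a) v g d -> is_derive p v (fun q => g (q + a)) d.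
Proof.
have quotE : (fun h : R => h^-1 *:
      (((fun q => g (q + a)) \o shift p) (h *: v) - g (p + a))) =
    (fun h : R => h^-1 *: ((g \o shift (p + a)) (h *: v) - g (p + a))).
  by apply: funext => h /=; rewrite addrA.
by case=> gd gdE; apply: DeriveDef; rewrite /derivable /derive quotE.
Qed.

Lemma mvt_segment (f df : V -> R) (p v : V) (h : R) : 0 < h ->
  (forall s, 0 <= s <= h -> is_derive (p + s *: v) v f (df (p + s *: v))) ->
  exists2 c, 0 <= c <= h & f (p + h *: v) - f p = h * df (p + c *: v).
Proof.
move=> h_gt0 fd.
have line_derive s : s \in `]0, h[ ->
    is_derive s 1 (fun r => f (p + r *: v)) (df (p + s *: v)).
  by rewrite in_itv /= => /andP[s0 sh]; apply/is_derive_line/fd; rewrite !ltW.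
have line_cont : {within `[0, h], continuous (fun r => f (p + r *: v))}.
  apply: continuous_in_subspaceT => s; rewrite inE /= in_itv /= => /fd/is_derive_line.
  by case=> /derivable1_diffP/differentiable_continuous.
have [c] := MVT h_gt0 line_derive line_cont.
rewrite in_itv /= => /andP[c0 ch]; rewrite scale0r addr0 subr0 mulrC => fE.
by exists c => //; rewrite !ltW.
Qed.

Lemma second_difference_mvt (g gv gvw : V -> R) (B : set V) (u v w : V) (h : R) :
  0 < h ->
  (forall s r, 0 <= s <= h -> 0 <= r <= h -> B (u + s *: v + r *: w)) ->
  (forall p, B p -> is_derive p v g (gv p)) ->
  (forall p, B p -> is_derive p w gv (gvw p)) ->
  exists s r, [/\ 0 <= s <= h, 0 <= r <= h &
    g (u + h *: v + h *: w) - g (u + h *: v) - (g (u + h *: w) - g u)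
      = h ^+ 2 * gvw (u + s *: v + r *: w)].
Proof.
move=> h_gt0 box gd gvd.
have h_ge0 : 0 <= h by rewrite ltW.
pose G q := g (q + h *: w) - g q.
have [s s_in GE] : exists2 s, 0 <= s <= h &
    G (u + h *: v) - G u = h * (gv (u + s *: v + h *: w) - gv (u + s *: v)).
  apply: (@mvt_segment G (fun q => gv (q + h *: w) - gv q)) => // s s_in.
  have Bs0 : B (u + s *: v).
    by have := box s 0 s_in; rewrite scale0r addr0 lexx h_ge0; apply.
  apply: is_deriveB; last exact: gd.
  by apply: is_derive_translate; apply: gd; apply: box; rewrite // lexx h_ge0.
have [r r_in gvE] : exists2 r, 0 <= r <= h &
    gv (u + s *: v + h *: w) - gv (u + s *: v) = h * gvw (u + s *: v + r *: w).
  by apply: mvt_segment => // r r_in; apply: gvd; apply: box.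
exists s, r; split => //.
by rewrite expr2 -mulrA -gvE -GE /G addrAC.
Qed.

Lemma ball_box (u v w : V) (r h : R) : h * (`|v| + `|w|) < r ->
  forall s t, 0 <= s <= h -> 0 <= t <= h -> ball u r (u + s *: v + t *: w).
Proof.
move=> hr s t /andP[s0 sh] /andP[t0 th].
rewrite -ball_normE /= -addrA opprD addrA subrr sub0r normrN.
apply: le_lt_trans (ler_normD _ _) _; rewrite !normrZ !ger0_norm //.
apply: le_lt_trans hr; rewrite mulrDr.
by apply: lerD; apply: ler_wpM2r.
Qed.

Lemma derive_mixedC (U : set V) (g gv gw gvw gwv : V -> R) (u v w : V) :
  open U -> U u ->
  (forall p, U p -> is_derive p v g (gv p)) ->
  (forall p, U p -> is_derive p w g (gw p)) ->
  (forall p, U p -> is_derive p w gv (gvw p)) ->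
  (forall p, U p -> is_derive p v gw (gwv p)) ->
  {for u, continuous gvw} -> {for u, continuous gwv} ->
  gvw u = gwv u.
Proof.
move=> oU Uu gvd gwd gvwd gwvd gvw_cont gwv_cont.
(* Otherwise, on a small box at u each mixed derivative stays within half the
   gap of its value at u, yet the second difference makes them agree at two
   points of the box. *)
have [//|neq] := eqVneq (gvw u) (gwv u).
pose e := `|gvw u - gwv u| / 2.
have e_gt0 : 0 < e by rewrite divr_gt0 // normr_gt0 subr_eq0.
have [r r_gt0 near_u] : exists2 r, 0 < r &
    forall p, ball u r p -> [/\ U p, `|gvw u - gvw p| < e & `|gwv u - gwv p| < e].
  apply/nbhs_ballP; near=> p; split; near: p.
  - exact: open_nbhs_nbhs.
  - by move/cvgrPdist_lt: gvw_cont; apply.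
  - by move/cvgrPdist_lt: gwv_cont; apply.
have ball_U p : ball u r p -> U p by case/near_u.
pose h := r / (`|v| + `|w| + 1).
have nvw_ge0 : 0 <= `|v| + `|w| by rewrite addr_ge0.
have h_gt0 : 0 < h by rewrite divr_gt0 // ltr_wpDl.
have hr : h * (`|v| + `|w|) < r.
  by rewrite /h mulrAC ltr_pdivrMr ?ltr_wpDl // ltr_pM2l // ltrDl.
have hr' : h * (`|w| + `|v|) < r by rewrite addrC.
have [s1 [t1 [s1_in t1_in E1]]] := second_difference_mvt h_gt0 (ball_box u hr)
  (fun p Bp => gvd p (ball_U p Bp)) (fun p Bp => gvwd p (ball_U p Bp)).
have [s2 [t2 [s2_in t2_in E2]]] := second_difference_mvt h_gt0 (ball_box u hr')
  (fun p Bp => gwd p (ball_U p Bp)) (fun p Bp => gwvd p (ball_U p Bp)).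
have [_ close1 _] := near_u _ (ball_box u hr s1_in t1_in).
have [_ _ close2] := near_u _ (ball_box u hr' s2_in t2_in).
have gvw_gwv : gvw (u + s1 *: v + t1 *: w) = gwv (u + s2 *: w + t2 *: v).
  apply: (mulfI (_ : h ^+ 2 != 0)); first by rewrite expf_neq0 // gt_eqF.
  by rewrite -E1 -E2 [u + h *: w + _]addrAC; ring.
rewrite gvw_gwv in close1; rewrite distrC in close2.
have := ler_distD (gwv (u + s2 *: w + t2 *: v)) (gvw u) (gwv u).
rewrite /e in close1 close2; lra.
Unshelve. all: by end_near.
Qed.

End Schwarz.

Section Dot.
Variable R : realType.

Lemma dotE (a b : 'rV[R]_3) : dot a b = \sum_k a 0 k * b 0 k.
Proof. by rewrite /dot mxE; apply: eq_bigr => k _; rewrite mxE. Qed.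

Lemma dotC (a b : 'rV[R]_3) : dot a b = dot b a.
Proof. by rewrite !dotE; apply: eq_bigr => k _; rewrite mulrC. Qed.

Lemma dotDr (a b c : 'rV[R]_3) : dot a (b + c) = dot a b + dot a c.
Proof. by rewrite !dotE -big_split; apply: eq_bigr => k _; rewrite !mxE mulrDr. Qed.

Lemma dotZr (a b : 'rV[R]_3) (k : R) : dot a (k *: b) = k * dot a b.
Proof. by rewrite !dotE mulr_sumr; apply: eq_bigr => i _; rewrite !mxE mulrCA. Qed.

End Dot.

Section Calculus.
Variables (R : realType) (V : normedModType R).

Lemma is_derive_entry m n (f : V -> 'M[R]_(m, n)) (p v : V) df i j :
  is_derive p v f df -> is_derive p v (fun q => f q i j) (df i j).
Proof.
case=> fd <-; apply: DeriveDef; first exact: (derivable_mxP f p v).1 fd i j.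
by rewrite derive_mx // mxE.
Qed.

Lemma is_derive_scale (W : normedModType R) (f : V -> R) (g : V -> W) (p v : V)
    df dg :
  is_derive p v f df -> is_derive p v g dg ->
  is_derive p v (fun q => f q *: g q) (f p *: dg + df *: g p).
Proof.
move=> [fd <-] [gd <-].
have quotE : (fun h : R => h^-1 *:
      (((fun q => f q *: g q) \o shift p) (h *: v) - f p *: g p))
    = (fun h : R => f (h *: v + p) *: (h^-1 *: (g (h *: v + p) - g p))
                    + (h^-1 *: (f (h *: v + p) - f p)) *: g p).
  apply: funext => h /=; rewrite [in RHS]scalerA [f _ * _]mulrC -!scalerA -scalerDr.
  by congr (_ *: _); rewrite scalerBr scalerBl addrA subrK.
have quot_cvg : (fun h : R => h^-1 *: (((fun q => f q *: g q) \o shift p) (h *: v)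
      - f p *: g p)) @ 0^' --> f p *: 'D_v g p + 'D_v f p *: g p.
  rewrite quotE; apply: cvgD; last exact: cvgZr_tmp fd.
  apply: cvgZ gd; suff : {for 0, continuous (fun h : R => f (h *: v + p))}.
    by move=> /continuous_withinNx; rewrite scale0r add0r.
  exact/differentiable_continuous/derivable1_diffP/(derivable1P _ _ _).1.
by apply: DeriveDef; [apply/cvg_ex; eexists; exact: quot_cvg | exact: cvg_lim quot_cvg].
Qed.

Lemma is_derive_cst_on (W : normedModType R) (U : set V) (f : V -> W) (c : W)
    (p v : V) df :
  open U -> U p -> (forall q, U q -> f q = c) -> is_derive p v f df -> df = 0.
Proof.
move=> oU Up fc fd.
have f_near : \forall q \near p, f q = cst c q.
  by near=> q; apply: fc; near: q; exact: open_nbhs_nbhs.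
by have [_ <-] := near_eq_is_derive f_near fd; rewrite derive_cst.
Unshelve. all: by end_near.
Qed.

Lemma is_derive_dot (f g : V -> 'rV[R]_3) (p v : V) df dg :
  is_derive p v f df -> is_derive p v g dg ->
  is_derive p v (fun q => dot (f q) (g q)) (dot df (g p) + dot (f p) dg).
Proof.
move=> fd gd.
have -> : (fun q => dot (f q) (g q)) = \sum_(k < 3) (fun q => f q 0 k * g q 0 k).
  by apply: funext => q; rewrite dotE fct_sumE.
rewrite !dotE -big_split /=; apply: is_derive_sum => k.
apply: is_derive_eq.
  exact: is_deriveM (is_derive_entry 0 k fd) (is_derive_entry 0 k gd).
by rewrite addrC [df 0 k * _]mulrC.
Qed.

End Calculus.

Section Smooth.
Variable R : realType.
Implicit Types (U : set (pt R)) (u p : pt R).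

Lemma iterD_rcons (W : normedModType R) (vs : seq (pt R)) (v : pt R) (f : pt R -> W) :
  Defs.iterD (rcons vs v) f = Defs.iterD vs (fun p => derive f p v).
Proof. by elim: vs => //= w vs ->. Qed.

Lemma smooth_on_partial (W : normedModType R) U (f : pt R -> W) j :
  smooth_on U f -> smooth_on U (partial j f).
Proof.
by move=> sf vs p Up; have := sf (rcons vs (ebasis R j)) p Up; rewrite iterD_rcons.
Qed.

Lemma is_derive_partial (W : normedModType R) (f : pt R -> W) p j :
  differentiable f p -> is_derive p (ebasis R j) f (partial j f p).
Proof. by move=> fd; apply/derivableP/diff_derivable. Qed.

Lemma smooth_partialC U (f : pt R -> R) u i j : open U -> smooth_on U f -> U u ->
  partial i (partial j f) u = partial j (partial i f) u.
Proof.
move=> oU sf Uu; have sfi := smooth_on_partial i sf; have sfj := smooth_on_partial j sf.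
apply: (derive_mixedC (g := f) (gv := partial j f) (gw := partial i f)
  (v := ebasis R j) (w := ebasis R i) oU Uu) => [p Up|p Up|p Up|p Up||].
- exact: is_derive_partial (sf [::] p Up).
- exact: is_derive_partial (sf [::] p Up).
- exact: is_derive_partial (sfj [::] p Up).
- exact: is_derive_partial (sfi [::] p Up).
- exact: differentiable_continuous (smooth_on_partial i sfj [::] Uu).
- exact: differentiable_continuous (smooth_on_partial j sfi [::] Uu).
Qed.

Lemma smooth_partialC_mx m n U (f : pt R -> 'M[R]_(m, n)) u i j :
  open U -> smooth_on U f -> U u ->
  partial i (partial j f) u = partial j (partial i f) u.
Proof.
move=> oU sf Uu; have sfi := smooth_on_partial i sf; have sfj := smooth_on_partial j sf.
have entry_cont (F : pt R -> 'M[R]_(m, n)) a b : differentiable F u ->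
    {for u, continuous (fun p => F p a b)}.
  move=> Fd; apply: differentiable_continuous.
  exact: differentiable_comp Fd (differentiable_coord _ a b).
apply/matrixP => a b.
apply: (derive_mixedC (g := fun p => f p a b) (gv := fun p => partial j f p a b)
  (gw := fun p => partial i f p a b) (gvw := fun p => partial i (partial j f) p a b)
  (gwv := fun p => partial j (partial i f) p a b) (v := ebasis R j) (w := ebasis R i)
  oU Uu)
  => [p Up|p Up|p Up|p Up||].
- exact: is_derive_entry (is_derive_partial _ (sf [::] p Up)).
- exact: is_derive_entry (is_derive_partial _ (sf [::] p Up)).
- exact: is_derive_entry (is_derive_partial _ (sfj [::] p Up)).
- exact: is_derive_entry (is_derive_partial _ (sfi [::] p Up)).
- exact: entry_cont (smooth_on_partial i sfj [::] Uu).
- exact: entry_cont (smooth_on_partial j sfi [::] Uu).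
Qed.

Lemma dot_partial_unit U (xi : pt R -> 'rV[R]_3) p j : open U ->
  (forall q, U q -> differentiable xi q) -> (forall q, U q -> dot (xi q) (xi q) = 1) ->
  U p -> dot (xi p) (partial j xi p) = 0.
Proof.
move=> oU xid xi_unit Up.
have xid_p := is_derive_partial j (xid p Up).
have := is_derive_cst_on oU Up xi_unit (is_derive_dot xid_p xid_p).
rewrite dotC => /eqP; rewrite -mulr2n mulrn_eq0 /=; exact/eqP.
Qed.

Lemma dot_partial_add_scale (x xi : pt R -> 'rV[R]_3) (t : pt R -> R) p j :
  differentiable x p -> differentiable xi p -> differentiable t p ->
  dot (xi p) (xi p) = 1 -> dot (xi p) (partial j xi p) = 0 ->
  dot (xi p) (partial j (fun q => x q + t q *: xi q) p)
    = dot (xi p) (partial j x p) + partial j t p.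
Proof.
move=> xd xid td xi_unit xi_xi'.
have yd : is_derive p (ebasis R j) (fun q => x q + t q *: xi q)
    (partial j x p + (t p *: partial j xi p + partial j t p *: xi p)).
  exact: is_deriveD (is_derive_partial j xd)
    (is_derive_scale (is_derive_partial j td) (is_derive_partial j xid)).
have -> : partial j (fun q => x q + t q *: xi q) p
    = partial j x p + (t p *: partial j xi p + partial j t p *: xi p).
  by case: yd => _ <-.
by rewrite !dotDr !dotZr xi_unit xi_xi' mulr0 add0r mulr1.
Qed.

Lemma normal_congruence_partial_dotC U (x xi : pt R -> 'rV[R]_3) u i j :
  open U -> smooth_on U x -> smooth_on U xi ->
  (forall q, U q -> dot (xi q) (xi q) = 1) -> normal_congruence U x xi -> U u ->
  dot (partial i xi u) (partial j x u) = dot (partial j xi u) (partial i x u).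
Proof.
move=> oU sx sxi xi_unit [t [st nc]] Uu.
have xi_xi' q k : U q -> dot (xi q) (partial k xi q) = 0.
  by apply: dot_partial_unit oU _ xi_unit => q' Uq'; exact: sxi [::] q' Uq'.
have first_order k q : U q -> dot (xi q) (partial k x q) + partial k t q = 0.
  move=> Uq.
  rewrite -(dot_partial_add_scale (sx [::] q Uq) (sxi [::] q Uq) (st [::] q Uq)).
  - exact: nc.
  - exact: xi_unit.
  - exact: xi_xi'.
have second_order k l : dot (partial l xi u) (partial k x u)
    + dot (xi u) (partial l (partial k x) u) + partial l (partial k t) u = 0.
  have first_order_derive : is_derive u (ebasis R l)
      (fun q => dot (xi q) (partial k x q) + partial k t q)
      (dot (partial l xi u) (partial k x u) + dot (xi u) (partial l (partial k x) u)
       + partial l (partial k t) u).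
    apply: (is_deriveD (f := fun q => dot (xi q) (partial k x q)) (g := partial k t)).
      exact: is_derive_dot (is_derive_partial l (sxi [::] u Uu))
        (is_derive_partial l (smooth_on_partial k sx [::] Uu)).
    exact: is_derive_partial l (smooth_on_partial k st [::] Uu).
  exact: is_derive_cst_on oU Uu (first_order k) first_order_derive.
have := second_order i j; have := second_order j i.
rewrite (smooth_partialC_mx i j oU sx Uu) (smooth_partialC i j oU st Uu).
by move=> E; rewrite -E => /addIr/addIr ->.
Qed.

Lemma jac_trmx_mulmxE (f g : pt R -> 'rV[R]_3) u i j :
  ((jac f u)^T *m jac g u) i j = dot (partial i f u) (partial j g u).
Proof. by rewrite dotE !mxE; apply: eq_bigr => k _; rewrite !mxE. Qed.

End Smooth.

Theorem theorem4p1 (R : realType) (U : set (pt R))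
    (x xi : pt R -> 'rV[R]_3) (Om : pt R -> 'M[R]_(3, 2))
    (Delta : pt R -> 'M[R]_2) :
  open U ->
  smooth_on U x ->
  (forall u, U u -> dot (xi u) (xi u) = 1) ->
  proper_frontal U xi ->
  normal_congruence U x xi ->
  tangent_moving_basis U xi Om ->
  (forall u, U u -> jac xi u = Om u *m (Delta u)^T) ->
  forall u, U u ->
    Delta u *m Pmx R *m (\adj (IIform Om x u))^T *m Delta u
      *m Iform Om u *m (Delta u)^T
    = \det (Delta u) *:
        (Pmx R *m \adj (IIform Om x u) *m Iform Om u *m (Delta u)^T).
Proof.
move=> oU sx xi_unit [[sxi _] _] nc _ jacE u Uu.
have DII : Delta u *m IIform Om x u = - ((jac xi u)^T *m jac x u).
  by rewrite /IIform mulmxN mulmxA jacE // trmx_mul trmxK.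
have DII_sym : (Delta u *m IIform Om x u)^T = Delta u *m IIform Om x u.
  rewrite DII linearN /= trmx_mul trmxK; congr (- _); apply/matrixP => i j.
  rewrite !jac_trmx_mulmxE dotC.
  exact: normal_congruence_partial_dotC j i oU sx sxi xi_unit nc Uu.
by rewrite (mulmx_Pmx_adj_sym DII_sym) -!scalemxAl.
Qed.
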